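(* There exists an infinite class of feasible configurations of size $n=4$ such that, for each configuration $G$ of this class, every dedicated leader election algorithm for $G$ takes time $\Omega(\sigma)$, where $\sigma$ is the span of $G$.
   Context: Model. A configuration is a finite simple undirected connected graph $G$ in which each node $v$ is tagged with a non-negative integer $t_v$ (wakeup tag); smallest tag $0$, span $\sigma$ = largest tag; size = number of nodes. Nodes are anonymous and communicate in synchronous global rounds. A node $v$ wakes up in the first global round $r\le t_v$ in which it receives a message, if any, and otherwise in global round $t_v$; its local clock is $0$ in its wakeup round, it acts from local round $1$, and nodes do not know the global clock. In each round a node transmits a message to all neighbours, listens, or terminates. A listening node receives $M$ if exactly one neighbour transmits ($M$), hears collision noise (distinct from silence and messages) if at least two neighbours transmit, and silence otherwise; a transmitting node hears nothing. A DRIP is a common function mapping a node's history (what it heard in each local round $0,\ldots,i-1$, including whether/by which message it was woken) to its action in local round $i\ge1$, with every node eventually terminating permanently; a decision function maps each node's final history to $\{0,1\}$; a dedicated leader election algorithm for $G$ is a DRIP plus decision function such that exactly one node of $G$ outputs $1$; $G$ is feasible if one exists. The time of such an algorithm is the number of rounds until the nodes terminate. *)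

From mathcomp Require Import all_boot.
From Stdlib Require List.

Set Implicit Arguments.
Unset Strict Implicit.
Unset Printing Implicit Defensive.

(* A configuration on the node set 'I_n: adjacency (as a finite function,
   so that Leibniz and extensional equality coincide) and wakeup tags. *)
Record config (n : nat) := Config {
  adj : {ffun 'I_n * 'I_n -> bool};
  tag : {ffun 'I_n -> nat}
}.

Definition edge n (G : config n) : rel 'I_n := fun u v => adj G (u, v).

Definition is_configuration n (G : config n) : Prop :=
  [/\ (forall u, ~~ edge G u u),
      (forall u v, edge G u v = edge G v u),
      (forall u v, connect (edge G) u v)
    & (exists v, tag G v = 0)].

Definition span n (G : config n) : nat := \max_(v : 'I_n) tag G v.

Inductive obs (M : Type) := Silence | Noise | Heard of M.
Arguments Silence {M}. Arguments Noise {M}. Arguments Heard {M} _.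

Inductive action (M : Type) := Transmit of M | Listen | Terminate.
Arguments Transmit {M} _. Arguments Listen {M}. Arguments Terminate {M}.

(* history at local round i: what was heard in local rounds 0..i-1 *)
Definition history (M : Type) := seq (obs M).

(* a DRIP: common map from histories to actions *)
Definition drip (M : Type) := history M -> action M.

(* state of a node: asleep, awake with its current history, or terminated
   with its final history and the global round of termination *)
Inductive nstate (M : Type) := Asleep | Active of history M | Done of history M & nat.
Arguments Asleep {M}. Arguments Active {M} _. Arguments Done {M} _ _.

Section Exec.
Variables (M : Type) (n : nat) (G : config n) (A : drip M).

Definition transmits (st : 'I_n -> nstate M) (u : 'I_n) : option M :=
  match st u with
  | Active h => match A h with Transmit m => Some m | _ => None end
  | _ => None
  end.

(* what node v would hear in the current round if listening *)
Definition hears (st : 'I_n -> nstate M) (v : 'I_n) : obs M :=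
  match pmap (fun u => if edge G v u then transmits st u else None) (enum 'I_n) with
  | [::] => Silence
  | [:: m] => Heard m
  | _ => Noise
  end.

(* global round r, given the states after rounds 0..r-1 *)
Definition step (r : nat) (st : 'I_n -> nstate M) : 'I_n -> nstate M :=
  fun v =>
  match st v with
  | Asleep =>
      match hears st v with
      | Heard m => Active [:: Heard m]
      | o => if tag G v <= r then Active [:: o]
             else Asleep
      end
  | Active h =>
      match A h with
      | Transmit _ => Active (rcons h Silence)     (* transmitter hears nothing *)
      | Listen => Active (rcons h (hears st v))
      | Terminate => Done h r
      end
  | Done h t => Done h t
  end.

(* exec r = states of all nodes after global rounds 0..r-1 *)
Fixpoint exec (r : nat) : 'I_n -> nstate M :=
  match r with
  | 0 => fun _ => Asleep
  | r'.+1 => step r' (exec r')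
  end.

End Exec.

Definition all_done M n (st : 'I_n -> nstate M) : Prop :=
  forall v, exists h t, st v = Done h t.

Definition leader_election M n (G : config n) (A : drip M) (d : history M -> bool)
  : Prop :=
  exists r, all_done (exec G A r) /\
    exists! v, exists h t, exec G A r v = Done h t /\ d h = true.

Definition feasible n (G : config n) : Prop :=
  exists (M : Type) (A : drip M) (d : history M -> bool), leader_election G A d.

(* Take the 4-cycle 0-1-2-3 with wakeup tags 0, 1, 5 + s, 1.  Nodes 1 and 3
   have the same neighbours and the same tag, so under any DRIP they are always
   in the same state: they transmit together or not at all, and their only
   common neighbour 2 hears silence or noise but never a message.  Hence node 2
   cannot wake up before round 5 + s, which is the span, and no algorithm
   terminates earlier.  The configuration is feasible: node 0 transmits once,
   waking the twins, whose simultaneous answer it hears as a collision; it is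
   the only node ever to hear one, so it can elect itself. *)

From Pilot Require Import Defs.
From mathcomp Require Import all_boot.
From Stdlib Require List.
From Stdlib Require Import FunctionalExtensionality.

Set Implicit Arguments.
Unset Strict Implicit.
Unset Printing Implicit Defensive.

Section Radio.
Variables (M : Type) (n : nat) (G : config n) (A : drip M).

Definition transmitting_nbrs (st : 'I_n -> nstate M) (w : 'I_n) : pred 'I_n :=
  [pred u | edge G w u & transmits A st u].

Lemma size_heard_messages st w :
  size (pmap (fun u => if edge G w u then transmits A st u else None) (enum 'I_n))
  = #|transmitting_nbrs st w|.
Proof.
rewrite size_pmap cardE /enum_mem size_filter count_filter.
by apply: eq_count => u; rewrite !inE andbT; case: (edge G w u).
Qed.

Lemma hears_Heard_card st w m :
  hears G A st w = Heard m -> #|transmitting_nbrs st w| = 1.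
Proof.
rewrite -size_heard_messages /hears.
by case: pmap => [|x [|y l]].
Qed.

Lemma hears_no_transmitter st w : #|transmitting_nbrs st w| = 0 -> hears G A st w = Silence.
Proof.
rewrite -size_heard_messages /hears.
by case: pmap.
Qed.

Lemma hears_eq_nbrs st u v : edge G u =1 edge G v -> hears G A st u = hears G A st v.
Proof.
move=> Euv; rewrite /hears.
by rewrite (@eq_pmap _ _ _ (fun x => if edge G v x then transmits A st x else None))
  // => x; rewrite Euv.
Qed.

Lemma exec_twins u v :
  edge G u =1 edge G v -> Defs.tag G u = Defs.tag G v ->
  forall r, exec G A r u = exec G A r v.
Proof.
move=> Euv Tuv; elim=> [|r IH] //=.
by rewrite /step IH (hears_eq_nbrs _ Euv) Tuv.
Qed.

Lemma hears_twins_not_Heard st w u v m :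
  u != v -> edge G w =1 pred2 u v -> st u = st v -> hears G A st w <> Heard m.
Proof.
move=> neq_uv Ew Suv /hears_Heard_card.
have nbrsE x : x \in transmitting_nbrs st w = (x \in pred2 u v) && transmits A st u.
  rewrite !inE Ew /= /transmits.
  by case: eqP => [->|_] //; case: eqP => [->|_] //; rewrite Suv.
case Tu: (transmits A st u) nbrsE => [m'|] nbrsE.
- by rewrite (eq_card (_ : _ =i pred2 u v)) ?card2 ?neq_uv // => x; rewrite nbrsE andbT.
- by rewrite eq_card0 // => x; rewrite nbrsE andbF.
Qed.

Section NeverWoken.
Variable w : 'I_n.
Hypothesis never_woken : forall r m, hears G A (exec G A r) w <> Heard m.

Lemma exec_asleep r : r <= Defs.tag G w -> exec G A r w = Asleep.
Proof.
elim: r => [|r IH] //= lt_r; rewrite /step (IH (ltnW lt_r)).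
case E: hears => [||m]; last by case: (never_woken E).
all: by rewrite leqNgt lt_r.
Qed.

Lemma tag_lt_all_done r : all_done (exec G A r) -> Defs.tag G w < r.
Proof.
move=> done_r; rewrite ltnNge; apply/negP => /exec_asleep asleep_r.
by have [h [t]] := done_r w; rewrite asleep_r.
Qed.

End NeverWoken.

Lemma step_quiet r st :
  (forall v, st v = Asleep -> r < Defs.tag G v) -> (forall v h, st v <> Active h) ->
  step G A r st = st.
Proof.
move=> late_asleep not_active; apply: functional_extensionality => v.
have silent : hears G A st v = Silence.
  apply: hears_no_transmitter; apply: eq_card0 => u; rewrite !inE /transmits.
  by case: (st u) (not_active u) => [|h /(_ h)|] //; rewrite andbF.
rewrite /step; case E: (st v) => [|h|h t] //; last by case: (not_active v h).
by rewrite silent leqNgt late_asleep.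
Qed.

Lemma exec_quiet r k :
  (forall v, exec G A r v = Asleep -> r + k <= Defs.tag G v) ->
  (forall v h, exec G A r v <> Active h) ->
  exec G A (r + k) = exec G A r.
Proof.
elim: k => [|k IH] late_asleep not_active; first by rewrite addn0.
rewrite addnS /= IH => [|v /late_asleep|//]; last by rewrite addnS; apply: ltnW.
by apply: step_quiet => // v /late_asleep; rewrite addnS.
Qed.

End Radio.

Lemma In_leq_sumn T (g : T -> nat) (l : seq T) x : List.In x l -> g x <= sumn (map g l).
Proof.
elim: l => [|y l IH] //= [<-|/IH le_x]; first exact: leq_addr.
exact: leq_trans le_x (leq_addl _ _).
Qed.

Lemma not_In_unbounded T (f : nat -> T) (g : T -> nat) :
  (forall s, s <= g (f s)) -> forall l : seq T, exists s, ~ List.In (f s) l.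
Proof.
move=> ge_s l; exists (sumn (map g l)).+1 => /(In_leq_sumn g).
by rewrite leqNgt (leq_trans _ (ge_s _)).
Qed.

(* The 4-cycle 0-1-2-3-0.  The offset 5 lets the other nodes terminate under
   [beep_once] before node 2 wakes up. *)
Definition square (s : nat) : config 4 :=
  Config [ffun p : 'I_4 * 'I_4 => odd (p.1 + p.2)]
         [ffun v : 'I_4 => nth 0 [:: 0; 1; 5 + s; 1] v].

Definition leader : 'I_4 := @Ordinal 4 0 isT.
Definition twin1 : 'I_4 := @Ordinal 4 1 isT.
Definition sleeper : 'I_4 := @Ordinal 4 2 isT.
Definition twin3 : 'I_4 := @Ordinal 4 3 isT.

Lemma enum_ord4 : enum 'I_4 = [:: leader; twin1; sleeper; twin3].
Proof. by apply: (inj_map val_inj); rewrite val_enum_ord. Qed.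

Lemma edge_square s : edge (square s) = fun u v => odd (u + v).
Proof. by do 2 apply: functional_extensionality => ?; rewrite /edge ffunE. Qed.

Lemma tag_square s :
  fun_of_fin (Defs.tag (square s)) = fun v : 'I_4 => nth 0 [:: 0; 1; 5 + s; 1] v.
Proof. by apply: functional_extensionality => ?; rewrite ffunE. Qed.

Definition beep_once : drip unit := fun h =>
  match h with [:: _] => Transmit tt | [:: _; _] => Listen | _ => Terminate end.

Definition heard_collision (h : history unit) : bool :=
  if h is [:: _; _; Noise] then true else false.

Definition settled (v : 'I_4) : nstate unit :=
  match val v with
  | 0 => Done [:: Silence; Silence; Noise] 3
  | 2 => Asleep
  | _ => Done [:: Heard tt; Silence; Silence] 4
  end.

Definition finished (s : nat) (v : 'I_4) : nstate unit :=
  if val v == 2 then Done [:: Silence; Silence; Silence] (8 + s) else settled v.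

Lemma exec_square_5 s : exec (square s) beep_once 5 = settled.
Proof.
apply: functional_extensionality => -[[|[|[|[|?]]]] ?] //;
by rewrite /exec /step /hears enum_ord4 edge_square tag_square; vm_compute.
Qed.

Lemma exec_square_quiet s : exec (square s) beep_once (5 + s) = settled.
Proof.
rewrite exec_quiet exec_square_5 // => -[[|[|[|[|?]]]] ?] //.
by rewrite tag_square.
Qed.

Lemma exec_square_final s : exec (square s) beep_once (9 + s) = finished s.
Proof.
have -> : exec (square s) beep_once (9 + s) =
  step (square s) beep_once (8 + s) (step (square s) beep_once (7 + s)
    (step (square s) beep_once (6 + s) (step (square s) beep_once (5 + s)
      (exec (square s) beep_once (5 + s))))) by [].
rewrite exec_square_quiet.
apply: functional_extensionality => -[[|[|[|[|?]]]] ?] //.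
by rewrite /step /hears enum_ord4 edge_square tag_square /= leqnn.
Qed.

Lemma square_configuration s : is_configuration (square s).
Proof.
have Eu u v : edge (square s) u v = odd (u + v) by rewrite edge_square.
have from_leader u : connect (edge (square s)) leader u.
  have e01 : edge (square s) leader twin1 by rewrite Eu.
  case: u => -[|[|[|[|?]]]] lt_u //.
  - by rewrite (_ : Ordinal lt_u = leader) //; apply: val_inj.
  - by rewrite (_ : Ordinal lt_u = twin1) ?connect1 //; apply: val_inj.
  - by apply: connect_trans (connect1 e01) (connect1 _); rewrite Eu.
  - by apply: connect1; rewrite Eu.
have sym_edge u v : edge (square s) u v = edge (square s) v u by rewrite !Eu addnC.
split => [u|//|u v|].
- by rewrite Eu addnn odd_double.
- by apply: connect_trans (from_leader v); rewrite (sym_connect_sym sym_edge).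
- by exists leader; rewrite tag_square.
Qed.

Lemma square_feasible s : feasible (square s).
Proof.
exists unit, beep_once, heard_collision, (9 + s); rewrite exec_square_final; split.
  by case=> -[|[|[|[|?]]]] ? //; do 2 eexists.
exists leader; split; first by exists [:: Silence; Silence; Noise], 3.
move=> v [h [t [fin_v coll_h]]]; apply: val_inj.
by move: fin_v coll_h; case: v => -[|[|[|[|?]]]] ? //= [<-].
Qed.

Lemma span_square s : span (square s) = 5 + s.
Proof.
apply/anti_leq/andP; split.
  by apply/bigmax_leqP => -[[|[|[|[|?]]]] ?] _ //; rewrite tag_square /= ?leq_addr.
by apply: leq_trans (leq_bigmax sleeper); rewrite tag_square.
Qed.

Lemma square_sleeper_never_woken M (A : drip M) s r m :
  hears (square s) A (exec (square s) A r) sleeper <> Heard m.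
Proof.
apply: (@hears_twins_not_Heard _ _ _ _ _ _ twin1 twin3) => //.
  by rewrite edge_square => -[[|[|[|[|?]]]] ?].
by apply: exec_twins => [x|]; rewrite ?tag_square // edge_square !addSn /= negbK.
Qed.

Lemma square_run_length M (A : drip M) s r :
  all_done (exec (square s) A r) -> 5 + s < r.
Proof.
by move/(tag_lt_all_done (@square_sleeper_never_woken M A s)); rewrite tag_square.
Qed.

Theorem proposition3 :
  exists C : config 4 -> Prop,
    (forall G, C G -> is_configuration G /\ feasible G) /\
    (forall s : seq (config 4), exists G, C G /\ ~ List.In G s) /\
    exists k : nat, 0 < k /\
      forall G, C G ->
      forall (M : Type) (A : drip M) (d : history M -> bool),
        leader_election G A d ->
        forall r, all_done (exec G A r) -> span G <= k * r.
Proof.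
exists (fun G => exists s, G = square s); split; [|split].
- by move=> _ [s ->]; split; [apply: square_configuration | apply: square_feasible].
- move=> l; have [|s not_in] := @not_In_unbounded _ square (fun G => Defs.tag G sleeper) _ l.
    by move=> s; rewrite tag_square leq_addl.
  by exists (square s); split; first by exists s.
- exists 1; split => // _ [s ->] M A d _ r /square_run_length lt_r.
  by rewrite mul1n span_square ltnW.
Qed.
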